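(* Let $m=p^{a}q^{b}$ with $a,b$ positive integers and $p,q$ distinct primes, and let $n\ge4$. Then there exists an edge-labeling $\alpha$ of the complete graph $K_n$ by ideals of $\mathbb{Z}/m\mathbb{Z}$ such that $\operatorname{rk}[\mathbb{Z}/m\mathbb{Z}]_{(K_n,\alpha)}=1$.
   Context: An edge-labeling assigns to each edge of a graph a nonzero proper ideal of $\mathbb{Z}/m\mathbb{Z}$. A spline on an edge-labeled graph $(G,\alpha)$ with vertices $v_1,\dots,v_n$ is a vector $(f_{v_1},\dots,f_{v_n})\in(\mathbb{Z}/m\mathbb{Z})^n$ with $f_{v_i}-f_{v_j}\in\alpha(v_iv_j)$ for every edge; the splines form a $\mathbb{Z}$-module $[\mathbb{Z}/m\mathbb{Z}]_{(G,\alpha)}$, whose rank $\operatorname{rk}$ is the smallest size of a generating set. *)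

From HB Require Import structures.
From mathcomp Require Import all_boot all_order all_algebra.
Set Implicit Arguments. Unset Strict Implicit. Unset Printing Implicit Defensive.
Import GRing.Theory.
Local Open Scope ring_scope.

(* Ideals of Z/mZ, represented by 'Z_m (only used with m > 1). *)
Definition is_ideal (m : nat) (I : {set 'Z_m}) : Prop :=
  [/\ 0 \in I,
      forall x y, x \in I -> y \in I -> x + y \in I
    & forall r x, x \in I -> r * x \in I].

Definition edge_labeling (n m : nat) (alpha : 'I_n -> 'I_n -> {set 'Z_m}) : Prop :=
  (forall i j, alpha i j = alpha j i) /\
  (forall i j, i != j ->
     [/\ is_ideal (alpha i j), alpha i j != [set 0] & alpha i j != [set: 'Z_m]]).

Definition is_spline (n m : nat) (alpha : 'I_n -> 'I_n -> {set 'Z_m})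
  (f : 'rV['Z_m]_n) : bool :=
  [forall i, forall j, (i != j) ==> (f 0 i - f 0 j \in alpha i j)].

Definition generates_splines (n m : nat) (alpha : 'I_n -> 'I_n -> {set 'Z_m})
  (G : {set 'rV['Z_m]_n}) : Prop :=
  (forall g, g \in G -> is_spline alpha g) /\
  (forall f, is_spline alpha f ->
     exists c : 'rV['Z_m]_n -> int, f = \sum_(g in G) g *~ c g).

Definition spline_rank_is (n m : nat) (alpha : 'I_n -> 'I_n -> {set 'Z_m})
  (k : nat) : Prop :=
  (exists G, generates_splines alpha G /\ #|G| = k) /\
  (forall G, generates_splines alpha G -> (k <= #|G|)%N).

From mathcomp Require Import all_boot all_order all_algebra.
From mathcomp Require Import zify.
Set Implicit Arguments. Unset Strict Implicit. Unset Printing Implicit Defensive.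
Import GRing.Theory.
Local Open Scope ring_scope.

(* Label K_n with the ideals P = (p^a) and Q = (q^b), which meet only in 0,
   choosing the labelling so that the P-edges and the Q-edges each connect
   all vertices.  A spline difference f_i - f_j then lies in P (sum along a path
   of P-edges) and in Q (along a path of Q-edges), hence vanishes: every spline
   is constant, and the constant spline 1 generates. *)

Lemma is_ideal_sub m (I : {set 'Z_m}) x y :
  is_ideal I -> x \in I -> y \in I -> x - y \in I.
Proof. by case=> _ addI mulI xI yI; rewrite -mulN1r addI ?mulI. Qed.

Section SplineAlongPaths.
Variables (n m : nat) (alpha : 'I_n -> 'I_n -> {set 'Z_m}) (f : 'rV['Z_m]_n).
Hypothesis spline_f : is_spline alpha f.

Lemma spline_sub_connect (I : {set 'Z_m}) (e : rel 'I_n) :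
  is_ideal I -> (forall i j, i != j -> e i j -> alpha i j \subset I) ->
  forall i j, connect e i j -> f 0 i - f 0 j \in I.
Proof.
move=> idI eI i _ /connectP[s path_s ->]; elim: s i path_s => [|k s IHs] i /=.
  by rewrite subrr; case: idI.
case/andP=> eik /IHs{}IHs; rewrite -(subrKA (f 0 k)).
case: (eqVneq i k) => [-> | neq_ik]; first by rewrite subrr add0r.
case: idI => _ addI _; apply: addI IHs; apply: (subsetP (eI _ _ neq_ik eik)).
by move: spline_f => /forallP/(_ i)/forallP/(_ k); rewrite neq_ik.
Qed.

Lemma spline_sub_root (I : {set 'Z_m}) (e : rel 'I_n) (r : 'I_n) :
  is_ideal I -> (forall i j, i != j -> e i j -> alpha i j \subset I) ->
  (forall i, connect e i r) -> forall i j, f 0 i - f 0 j \in I.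
Proof.
move=> idI eI con_r i j; rewrite -(subrKA (f 0 r)) -[f 0 r - f 0 j]opprB.
by apply: (is_ideal_sub idI); apply: spline_sub_connect idI eI _ _ (con_r _).
Qed.

Lemma spline_constant (I J : {set 'Z_m}) (eI eJ : rel 'I_n) (r s : 'I_n) :
  is_ideal I -> is_ideal J -> (forall x, x \in I -> x \in J -> x = 0) ->
  (forall i j, i != j -> eI i j -> alpha i j \subset I) ->
  (forall i j, i != j -> eJ i j -> alpha i j \subset J) ->
  (forall i, connect eI i r) -> (forall i, connect eJ i s) ->
  forall i j, f 0 i = f 0 j.
Proof.
move=> idI idJ IJ0 subI subJ conI conJ i j; apply/eqP; rewrite -subr_eq0.
apply/eqP; apply: IJ0; first exact: (spline_sub_root idI subI conI).
exact: (spline_sub_root idJ subJ conJ).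
Qed.

End SplineAlongPaths.

Lemma spline_rank_one n m (alpha : 'I_n -> 'I_n -> {set 'Z_m}) :
  (0 < n)%N -> (forall i j, i != j -> 0 \in alpha i j) ->
  (forall f, is_spline alpha f -> forall i j, f 0 i = f 0 j) ->
  spline_rank_is alpha 1.
Proof.
case: n alpha => // n alpha _ alpha0 splines_const.
have spline1 : is_spline alpha (const_mx 1).
  apply/forallP=> i; apply/forallP=> j; apply/implyP=> neq_ij.
  by rewrite !mxE subrr alpha0.
split.
  exists [set const_mx 1]; split; last exact: cards1.
  split=> [g | f spline_f]; first by rewrite inE => /eqP ->.
  exists (fun=> (val (f 0 ord0))%:Z); rewrite big_set1.
  apply/matrixP=> i j; rewrite (ord1 i) -natz mulrz_nat mulmxnE mxE natr_Zp.
  exact: splines_const.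
move=> G [_ /(_ _ spline1)[c sum1]]; rewrite card_gt0; apply/eqP => G0.
by move: sum1; rewrite G0 big_set0 => /matrixP/(_ 0 ord0)/eqP; rewrite !mxE oner_eq0.
Qed.

Section DivisorIdeal.
Variables (m d : nat).
Hypotheses (m_gt1 : (1 < m)%N) (d_dvd_m : (d %| m)%N).

Definition dvd_ideal : {set 'Z_m} := [set x : 'Z_m | (d %| x)%N].

Lemma val_Zp_add (x y : 'Z_m) : val (x + y) = ((x + y) %% m)%N.
Proof. by rewrite /=; congr (_ %% _)%N; exact: Zp_cast. Qed.

Lemma val_Zp_mul (x y : 'Z_m) : val (x * y) = ((x * y) %% m)%N.
Proof. by rewrite /=; congr (_ %% _)%N; exact: Zp_cast. Qed.

Lemma dvdn_modm k : (d %| k %% m)%N = (d %| k)%N.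
Proof. by rewrite /dvdn (modn_dvdm _ d_dvd_m). Qed.

Lemma dvd_ideal_is_ideal : is_ideal dvd_ideal.
Proof.
split=> [|x y|r x]; rewrite !inE ?dvdn0 // ?val_Zp_add ?val_Zp_mul dvdn_modm.
  exact: dvdn_add.
exact: dvdn_mull.
Qed.

Lemma dvd_ideal_neq0 : (0 < d < m)%N -> dvd_ideal != [set 0].
Proof.
case/andP=> d_gt0 d_lt_m.
have val_d : nat_of_ord (d%:R : 'Z_m) = d by rewrite val_Zp_nat // modn_small.
apply/eqP => /setP/(_ d%:R); rewrite !inE val_d dvdnn => /esym/eqP.
by move/(congr1 (@nat_of_ord _)); rewrite val_d => d0; rewrite d0 in d_gt0.
Qed.

Lemma dvd_ideal_proper : (1 < d)%N -> dvd_ideal != [set: 'Z_m].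
Proof.
move=> d_gt1; apply/eqP => /setP/(_ 1); rewrite !inE.
rewrite /= Zp_cast // modn_small // dvdn1 => /eqP d1.
by rewrite d1 in d_gt1.
Qed.

End DivisorIdeal.

Lemma dvd_idealI0 m d1 d2 (x : 'Z_m) : (1 < m)%N -> (m %| lcmn d1 d2)%N ->
  x \in dvd_ideal m d1 -> x \in dvd_ideal m d2 -> x = 0.
Proof.
rewrite !inE => m_gt1 m_dvd d1x d2x.
have /(dvdn_trans m_dvd) : (lcmn d1 d2 %| x)%N by rewrite dvdn_lcm d1x d2x.
rewrite /dvdn modn_small => [/eqP x0|]; first exact: val_inj.
by rewrite -[in X in (_ < X)%N](Zp_cast m_gt1) ltn_ord.
Qed.

(* The edges {0, j} for j >= 2 and {1, 2}: a spanning tree of K_n whose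
   complement is connected as soon as n >= 4. *)
Definition split_edge (i j : nat) : bool :=
  ((minn i j == 0) && (1 < maxn i j)%N) || ((minn i j == 1) && (maxn i j == 2)).

Lemma split_edgeC i j : split_edge i j = split_edge j i.
Proof. by rewrite /split_edge minnC maxnC. Qed.

Section SplitEdgeConnectivity.
Variable n : nat.
Hypothesis n_gt2 : (2 < n)%N.

Let v k : 'I_n.+1 := inord k.

Let val_v k : (k <= n)%N -> v k = k :> nat.
Proof. exact: inordK. Qed.

Lemma split_edge_connect (i : 'I_n.+1) :
  connect [rel x y : 'I_n.+1 | split_edge x y] i (v 0).
Proof.
have v0 : v 0 = 0 :> nat by rewrite val_v.
have v2 : v 2 = 2 :> nat by rewrite val_v //; lia.
case: (ltngtP i 1) => [i0 | i_gt1 | i1].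
- by rewrite (_ : i = v 0) //; apply: ord_inj; rewrite v0; lia.
- by apply: connect1; rewrite /= /split_edge v0; lia.
- apply: (connect_trans (y := v 2)); apply: connect1;
    by rewrite /= /split_edge ?v0 v2 ?i1.
Qed.

Lemma split_edgeN_connect (i : 'I_n.+1) :
  connect [rel x y : 'I_n.+1 | ~~ split_edge x y] i (v 1).
Proof.
have v1 : v 1 = 1 :> nat by rewrite val_v //; lia.
have v3 : v 3 = 3 :> nat by rewrite val_v.
case: (eqVneq (i : nat) 2) => [i2 | i_neq2].
  apply: (connect_trans (y := v 3)); apply: connect1;
    by rewrite /= /split_edge ?v1 v3 ?i2.
case: (eqVneq (i : nat) 1) => [i1 | i_neq1].
  by rewrite (_ : i = v 1) //; apply: ord_inj; rewrite v1.
by apply: connect1; rewrite /= /split_edge v1; lia.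
Qed.

End SplitEdgeConnectivity.

Theorem mainTheorem11 (p q a b n : nat) :
  prime p -> prime q -> p != q -> (0 < a)%N -> (0 < b)%N -> (4 <= n)%N ->
  exists alpha : 'I_n -> 'I_n -> {set 'Z_(p ^ a * q ^ b)},
    edge_labeling alpha /\ spline_rank_is alpha 1.
Proof.
move=> p_pr q_pr p_neq_q a_gt0 b_gt0; case: n => [//|n] n_ge4.
set m := (p ^ a * q ^ b)%N.
have pa_gt1 : (1 < p ^ a)%N by rewrite -(expn0 p) ltn_exp2l ?prime_gt1.
have qb_gt1 : (1 < q ^ b)%N by rewrite -(expn0 q) ltn_exp2l ?prime_gt1.
have m_gt1 : (1 < m)%N by rewrite /m; nia.
have cop : coprime (p ^ a) (q ^ b).
  by rewrite coprime_pexpl // coprime_pexpr // prime_coprime // dvdn_prime2.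
have idP := dvd_ideal_is_ideal m_gt1 (dvdn_mulr (q ^ b) (dvdnn (p ^ a))).
have idQ := dvd_ideal_is_ideal m_gt1 (dvdn_mull (p ^ a) (dvdnn (q ^ b))).
have PQ0 x : x \in dvd_ideal m (p ^ a) -> x \in dvd_ideal m (q ^ b) -> x = 0.
  by apply: dvd_idealI0; rewrite // /m -muln_lcm_gcd (eqP cop) muln1.
pose alpha (i j : 'I_n.+1) :=
  if split_edge i j then dvd_ideal m (p ^ a) else dvd_ideal m (q ^ b).
exists alpha; split.
  split=> [i j | i j _]; first by rewrite /alpha split_edgeC.
  rewrite /alpha; case: ifP => _; split;
    rewrite ?dvd_ideal_neq0 ?dvd_ideal_proper //; rewrite /m; nia.
apply: spline_rank_one => // [i j _ | f spline_f i j].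
  by rewrite /alpha; case: ifP => _; [case: idP | case: idQ].
have n_gt2 : (2 < n)%N by lia.
have const := spline_constant spline_f idP idQ PQ0 _ _
  (split_edge_connect n_gt2) (split_edgeN_connect n_gt2).
by apply: const => {}i {}j _ /= e_ij; rewrite /alpha ?(negbTE e_ij) ?e_ij.
Qed.
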